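(* Let $X=(X(t))_{t\ge0}$ be a centered Gaussian process, self-similar of order $\beta\in(0,1)$, satisfying (H.1) with parameters $\alpha,\lambda,\psi$. Then there exists a continuous function $u_1:(0,\infty)\to\mathbb{R}$ such that for all $s>0$, $$\mathbb{E}\big[(X(s+1)-X(s))^2\big]=2\lambda s^{2\beta-\alpha}(1+u_1(s)).$$ Furthermore, for every $\eta>0$ there exists a constant $C_\eta>0$ such that for all $s\ge\eta$, $|u_1(s)|\le C_\eta s^{-\delta_1}$, where $\delta_1=1-\alpha$ if $\alpha<1$ and $\delta_1=2-\alpha$ if $\alpha\ge1$.
   Context: Self-similar of order $\beta$ means $(X(ct))_{t\ge0}\overset{law}{=}(c^\beta X(t))_{t\ge0}$ for all $c>0$. Let $\phi(x)=\mathbb{E}[X(1)X(x)]$, $x\ge1$, so $\mathbb{E}[X(s)X(t)]=s^{2\beta}\phi(t/s)$ for $0<s\le t$. (H.1): there is $\alpha\in(0,2\beta]$ with $\phi(x)=-\lambda(x-1)^\alpha+\psi(x)$, where $\lambda>0$, $\psi$ is twice differentiable on an open set containing $[1,\infty)$, and there is $C\ge0$ such that for $x\in(1,\infty)$: $|\psi'(x)|\le Cx^{\alpha-1}$, $|\psi''(x)|\le Cx^{-1}(x-1)^{\alpha-1}$, and $\psi'(1)=\beta\psi(1)$ when $\alpha\ge1$. *)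

From HB Require Import structures.
From mathcomp Require Import all_boot all_order all_algebra.
From mathcomp Require Import all_classical all_reals all_analysis.
Set Implicit Arguments. Unset Strict Implicit. Unset Printing Implicit Defensive.
Import Order.TTheory GRing.Theory Num.Theory.
Import numFieldNormedType.Exports.
Local Open Scope classical_set_scope.
Local Open Scope ring_scope.

Definition gaussian_rv d (T : measurableType d) (R : realType)
    (P : probability T R) (Y : T -> R) : Prop :=
  exists m : R,
    (exists s : R, s != 0 /\
       forall A : set R, measurable A -> P (Y @^-1` A) = normal_prob m s A)
    \/ (forall A : set R, measurable A -> P (Y @^-1` A) = \d_m A).

Definition centered_gaussian_process d (T : measurableType d) (R : realType)
    (P : probability T R) (X : R -> T -> R) : Prop :=
  (forall t, 0 <= t -> measurable_fun setT (X t)) /\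
  (forall t, 0 <= t -> ('E_P[X t] = 0)%E) /\
  (forall (n : nat) (ts : 'I_n -> R) (a : 'I_n -> R),
      (forall i, 0 <= ts i) ->
      gaussian_rv P (fun w => \sum_(i < n) a i * X (ts i) w)).

(* Self-similarity of order beta: for every c > 0, the processes
   (X(ct))_{t>=0} and (c^beta X(t))_{t>=0} have the same finite-dimensional
   distributions (tested on measurable rectangles, which generate the
   product sigma-algebra and form a pi-system). *)
Definition self_similar d (T : measurableType d) (R : realType)
    (P : probability T R) (beta : R) (X : R -> T -> R) : Prop :=
  forall c : R, 0 < c ->
  forall (n : nat) (ts : 'I_n -> R) (B : 'I_n -> set R),
    (forall i, 0 <= ts i) -> (forall i, measurable (B i)) ->
    (P [set w | forall i, B i (X (c * ts i)%R w)]
    = P [set w | forall i, B i (c `^ beta * X (ts i) w)%R])%E.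

Definition phi_cov d (T : measurableType d) (R : realType)
    (P : probability T R) (X : R -> T -> R) (x : R) : \bar R :=
  ('E_P[fun w => (X 1 w * X x w)%R])%E.

Definition H1 d (T : measurableType d) (R : realType)
    (P : probability T R) (beta : R) (X : R -> T -> R)
    (alpha lambda : R) (psi : R -> R) : Prop :=
  [/\ (0 < alpha /\ alpha <= 2 * beta) /\ 0 < lambda,
      (forall x : R, 1 <= x ->
         phi_cov P X x = (- lambda * (x - 1) `^ alpha + psi x)%:E),
      (exists U : set R, open U /\ `[1, +oo[ `<=` U /\
         forall x, U x -> derivable psi x 1 /\ derivable (derive1 psi) x 1),
      (exists C : R, 0 <= C /\
         forall x : R, 1 < x ->
           `|derive1 psi x| <= C * x `^ (alpha - 1) /\
           `|derive1 (derive1 psi) x| <= C * x^-1 * (x - 1) `^ (alpha - 1))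
    & (1 <= alpha -> derive1 psi 1 = beta * psi 1)].

Definition delta1 (R : realType) (alpha : R) : R :=
  if alpha < 1 then 1 - alpha else 2 - alpha.

From HB Require Import structures.
From mathcomp Require Import all_boot all_order all_algebra.
From mathcomp Require Import all_classical all_reals all_analysis.
From mathcomp Require Import measurable_realfun ring lra.
Import Order.TTheory GRing.Theory Num.Theory.
Import numFieldNormedType.Exports.
Local Open Scope classical_set_scope.
Local Open Scope ring_scope.

(** Self-similarity with scale [s] and [h = 1/s] give
    [E[(X(s+1) - X(s))^2] = s^(2 beta) ((1+h)^(2 beta) phi(1) + phi(1) - 2 phi(1+h))
                         = s^(2 beta) (2 lambda h^alpha + D(h))]
    with [D(h) = (1+h)^(2 beta) psi(1) + psi(1) - 2 psi(1+h)], so that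
    [u1(s) = s^alpha D(1/s) / (2 lambda)]. The decay of [u1] is the smallness of
    [D] near [0]: [D(h) = O(h)] by the mean value theorem and, when [alpha >= 1],
    [psi'(1) = beta psi(1)] cancels the linear term of [D], so [D(h) = O(h^2)] by a
    first-order Taylor estimate. *)

Section second_moments.
Context {d} {T : measurableType d} {R : realType} (P : probability T R).

Lemma integrable_sqr {a : T -> R} {A : R} : measurable_fun setT a ->
  (\int[P]_w (a w ^+ 2)%:E = A%:E)%E ->
  P.-integrable setT (EFin \o (fun w => a w ^+ 2)).
Proof.
move=> ma Ia; apply/integrableP; split.
  by apply/measurable_EFinP; exact: measurable_funX.
rewrite (eq_integral (fun w => (a w ^+ 2)%:E)) ?Ia ?ltry // => w _.
by rewrite /= ger0_norm // sqr_ge0.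
Qed.

Lemma integral_sqrB {a b : T -> R} {A B C : R} :
  measurable_fun setT a -> measurable_fun setT b ->
  (\int[P]_w (a w ^+ 2)%:E = A%:E)%E ->
  (\int[P]_w (b w ^+ 2)%:E = B%:E)%E ->
  (\int[P]_w (a w * b w)%:E = C%:E)%E ->
  (\int[P]_w ((b w - a w) ^+ 2)%:E = (B + A - 2 * C)%:E)%E.
Proof.
move=> ma mb Ia Ib Iab.
have iA := integrable_sqr ma Ia; have iB := integrable_sqr mb Ib.
have iBA : P.-integrable setT (EFin \o (fun w => b w ^+ 2 + a w ^+ 2)).
  by rewrite /comp; under eq_fun do rewrite EFinD; exact: integrableD.
have iAB : P.-integrable setT (EFin \o (fun w => a w * b w)).
  apply: le_integrable iBA => //.
    by apply/measurable_EFinP; exact: measurable_funM.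
  move=> w _ /=; rewrite lee_fin [leRHS]ger0_norm ?addr_ge0 ?sqr_ge0 //.
  (* [2 |a b| <= a^2 + b^2] *)
  rewrite normrM; have := sqr_ge0 (`|a w| - `|b w|).
  rewrite sqrrB !real_normK ?num_real //; nra.
have i2AB : P.-integrable setT (EFin \o (fun w => 2 * (a w * b w))).
  by rewrite /comp; under eq_fun do rewrite EFinM; exact: integrableZl.
rewrite (eq_integral (fun w => (b w ^+ 2 + a w ^+ 2)%:E
                               - (2 * (a w * b w))%:E))%E; last first.
  by move=> w _; rewrite -EFinB sqrrB; congr EFin; ring.
rewrite integralB_EFin //.
under eq_integral do rewrite EFinD.
rewrite integralD_EFin // Ia Ib.
under eq_integral do rewrite EFinM.
by rewrite integralZl // Iab.
Qed.

Lemma ge0_integral_comp_eq_of_rectangles (f1 f2 : T -> R * R) :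
  measurable_fun setT f1 -> measurable_fun setT f2 ->
  (forall A B, measurable A -> measurable B ->
     P (f1 @^-1` (A `*` B)) = P (f2 @^-1` (A `*` B))) ->
  forall g : R * R -> R, measurable_fun setT g -> (forall z, 0 <= g z) ->
  (\int[P]_w (g (f1 w))%:E = \int[P]_w (g (f2 w))%:E)%E.
Proof.
move=> mf1 mf2 eqAB g mg g0.
have mgE : measurable_fun setT (EFin \o g) by exact/measurable_EFinP.
have pushE f : measurable_fun setT f ->
    (\int[P]_w (g (f w))%:E = \int[pushforward P f]_z (g z)%:E)%E.
  by move=> mf; rewrite ge0_integral_pushforward //= => y _; rewrite lee_fin.
rewrite pushE // pushE //; apply: eq_measure_integral => A mA _.
apply: (measure_unique [set A `*` B | A in measurable & B in measurable]
          (fun=> setT)) => //.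
- exact: measurable_prod_measurableType.
- move=> _ _ [A1 mA1 [B1 mB1 <-]] [A2 mA2 [B2 mB2 <-]].
  exists (A1 `&` A2); first exact: measurableI.
  by exists (B1 `&` B2); [exact: measurableI|rewrite setXI].
- by move=> _; exists setT => //; exists setT => //; rewrite setXTT.
- by rewrite bigcup_const.
- by move=> _ [A1 mA1 [B1 mB1 <-]]; exact: eqAB.
- move=> _; apply: (le_lt_trans (probability_le1 P _)); last exact: ltry.
  by move: (mf1 measurableT setT measurableT); rewrite setTI.
Qed.

End second_moments.

Lemma forall_ord2 (F : 'I_2 -> Prop) :
  (forall i, F i) <-> F ord0 /\ F ord_max.
Proof.
split=> [FT|[F0 F1] [[|[|k]] ik] //]; first by split.
- by rewrite (_ : Ordinal ik = ord0) //; exact: val_inj.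
- by rewrite (_ : Ordinal ik = ord_max) //; exact: val_inj.
Qed.

Lemma powR_mul2 {R : realType} (c r : R) : c `^ (2 * r) = c `^ r ^+ 2.
Proof. by rewrite mulrC powRrM powR_mulrn // powR_ge0. Qed.

Section self_similar_moments.
Context {d} {T : measurableType d} {R : realType} {P : probability T R}.
Context {beta : R} {X : R -> T -> R}.
Hypothesis mX : forall t, 0 <= t -> measurable_fun setT (X t).
Hypothesis Xss : self_similar P beta X.

Lemma self_similar_integral2 c t1 t2 (g : R * R -> R) :
  0 < c -> 0 <= t1 -> 0 <= t2 -> measurable_fun setT g -> (forall z, 0 <= g z) ->
  (\int[P]_w (g (X (c * t1) w, X (c * t2) w))%:E
   = \int[P]_w (g (c `^ beta * X t1 w, c `^ beta * X t2 w))%:E)%E.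
Proof.
move=> c0 t10 t20; apply: ge0_integral_comp_eq_of_rectangles.
- by apply: measurable_fun_pair; apply: mX; rewrite mulr_ge0 // ltW.
- by apply: measurable_fun_pair; apply: measurable_funM => //; exact: mX.
move=> A B mA mB.
pose ts (i : 'I_2) := if val i == 0%N then t1 else t2.
pose Bs (i : 'I_2) := if val i == 0%N then A else B.
have := Xss c c0 2%N ts Bs.
rewrite (_ : [set w | _] = (fun w => (X (c * t1) w, X (c * t2) w)) @^-1` (A `*` B)).
  rewrite (_ : [set w | _] =
      (fun w => (c `^ beta * X t1 w, c `^ beta * X t2 w)) @^-1` (A `*` B)).
    by apply; [move=> i; rewrite /ts; case: ifP|move=> i; rewrite /Bs; case: ifP].
  by apply/seteqP; split => w /=; rewrite forall_ord2.
by apply/seteqP; split => w /=; rewrite forall_ord2.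
Qed.

Lemma self_similar_increment_moment {s v1 v : R} : 0 < s ->
  phi_cov P X 1 = v1%:E -> phi_cov P X (1 + s^-1) = v%:E ->
  ('E_P[fun w => ((X (s + 1) w - X s w) ^+ 2)%R]
   = (s `^ (2 * beta) * ((1 + s^-1) `^ (2 * beta) * v1 + v1 - 2 * v))%:E)%E.
Proof.
rewrite /phi_cov unlock => s0 I1 Ih.
set h := s^-1; have h1 : 0 < 1 + h by rewrite addr_gt0 // invr_gt0.
have {}I1 : (\int[P]_w (X 1 w ^+ 2)%:E = v1%:E)%E.
  by rewrite -I1; apply: eq_integral => w _; rewrite expr2.
have mX1 := mX _ ler01; have mXh := mX _ (ltW h1).
have sqr_ge0_comp (f : R * R -> R) : forall z, 0 <= f z ^+ 2 by move=> z; exact: sqr_ge0.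
have scale_sqr c (f : T -> R) : 0 <= c -> measurable_fun setT f ->
    (\int[P]_w ((c * f w) ^+ 2)%:E = (c ^+ 2)%:E * \int[P]_w (f w ^+ 2)%:E)%E.
  move=> c0 mf; under eq_integral do rewrite exprMn EFinM.
  rewrite ge0_integralZl_EFin ?sqr_ge0 // => [w _|]; first by rewrite lee_fin sqr_ge0.
  by apply/measurable_EFinP; exact: measurable_funX.
have Ih2 : (\int[P]_w (X (1 + h) w ^+ 2)%:E
            = ((1 + h) `^ (2 * beta) * v1)%:E)%E.
  have := self_similar_integral2 (1 + h) 1 1 (fun z => z.1 ^+ 2) h1 ler01 ler01.
  rewrite mulr1 /= => ->; last exact: sqr_ge0_comp.
    by rewrite scale_sqr ?powR_ge0 // I1 -powR_mul2 -EFinM.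
  by apply: measurable_funX; exact: measurable_fst.
have := self_similar_integral2 s 1 (1 + h) (fun z => (z.2 - z.1) ^+ 2) s0 ler01 (ltW h1).
rewrite mulr1 mulrDr mulr1 mulfV ?gt_eqF //= => ->; last exact: sqr_ge0_comp.
  under eq_integral do rewrite -mulrBr.
  rewrite scale_sqr ?powR_ge0 //; last exact: measurable_funB.
  by rewrite (integral_sqrB P mX1 mXh I1 Ih2 Ih) -EFinM (powR_mul2 s).
apply: measurable_funX.
by apply: measurable_funB; [exact: measurable_snd|exact: measurable_fst].
Qed.

End self_similar_moments.

Section mean_value.
Context {R : realType}.
Implicit Types (f : R -> R) (a b M : R).

Lemma mean_value_derive1 {f a b} : a < b ->
  (forall x, a <= x -> x <= b -> derivable f x 1) ->
  exists2 c, a < c < b & f b - f a = derive1 f c * (b - a).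
Proof.
move=> ab df.
have [||c] := @MVT R f (derive1 f) a b ab.
- move=> x /[dup] /itvP xab _; rewrite derive1E.
  by apply: derivableP; apply: df; rewrite ltW ?xab.
- apply: derivable_within_continuous => x /itvP xab.
  by apply: df; rewrite ?xab.
- by rewrite in_itv /=; exists c.
Qed.

Lemma ler_norm_mean_value f a b M : a < b ->
  (forall x, a <= x -> x <= b -> derivable f x 1) ->
  (forall x, a < x -> x < b -> `|derive1 f x| <= M) ->
  `|f b - f a| <= M * (b - a).
Proof.
move=> ab df fM; have [c /andP[ac cb] ->] := mean_value_derive1 ab df.
rewrite normrM [`|b - a|]ger0_norm ?subr_ge0 ?(ltW ab) //.
by apply: ler_wpM2r; rewrite ?subr_ge0 ?(ltW ab) ?fM.
Qed.

Lemma ler_norm_taylor1 f a b M : a < b ->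
  (forall x, a <= x -> x <= b -> derivable f x 1) ->
  (forall x, a < x -> x < b -> `|derive1 f x - derive1 f a| <= M * (x - a)) ->
  `|f b - f a - derive1 f a * (b - a)| <= M * (b - a) ^+ 2.
Proof.
move=> ab df f'M; have [c /andP[ac cb] ->] := mean_value_derive1 ab df.
rewrite -mulrBl normrM [`|b - a|]ger0_norm ?subr_ge0 ?(ltW ab) //.
have {f'M} f'M := f'M c ac cb.
have M0 : 0 <= M.
  by rewrite -(@pmulr_lge0 _ (c - a)) ?subr_gt0 // (le_trans _ f'M).
apply: (le_trans (ler_wpM2r _ f'M)); first by rewrite subr_ge0 ltW.
by rewrite expr2 mulrA ler_wpM2r ?ler_wpM2l ?lerB ?subr_ge0 // ltW.
Qed.

End mean_value.

Section power_estimates.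
Context {R : realType}.
Implicit Types (r h : R).

Lemma powR1D_sub1_le {r h} : 0 <= r <= 2 -> 0 <= h ->
  `|(1 + h) `^ r - 1| <= h * (2 + h).
Proof.
move=> /andP[r0 r2] h0; have h1 : 1 <= 1 + h by rewrite lerDl.
rewrite ger0_norm ?subr_ge0; last by move: (ler_powR h1 r0); rewrite powRr0.
have : (1 + h) `^ r <= (1 + h) `^ 2%:R by exact: ler_powR.
by rewrite powR_mulrn ?(le_trans ler01) //; nra.
Qed.

Lemma powR1D_taylor_le {r h} : 1 <= r <= 2 -> 0 < h ->
  `|(1 + h) `^ r - 1 - r * h| <= r * h ^+ 2.
Proof.
move=> /andP[r1 r2] h0; have r0 : 0 < r by rewrite (lt_le_trans ltr01).
have dpow (x : R) : 0 < x -> derive1 (fun y => y `^ r) x = r * x `^ (r - 1).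
  by move=> x0; rewrite powR_derive1 // in_itv /= x0.
have := @ler_norm_taylor1 R (fun y => y `^ r) 1 (1 + h) r.
have hE : 1 + h - 1 = h by rewrite addrC addKr.
rewrite /= dpow // powR1 mulr1 hE; apply; first by rewrite ltrDl.
  move=> x x1 _; apply: derivable_powR.
  by rewrite in_itv /= andbT (lt_le_trans ltr01).
move=> x x1 _; rewrite dpow ?(lt_trans ltr01) //.
have r10 : 0 <= r - 1 by rewrite subr_ge0.
have e1 : 1 <= x `^ (r - 1) by move: (ler_powR (ltW x1) r10); rewrite powRr0.
have e2 : x `^ (r - 1) <= x by apply: ler1_powR; [exact: ltW|lra].
by rewrite ger0_norm; nra.
Qed.

End power_estimates.

Lemma derivable1_continuous {R : numFieldType} {V : normedModType R}
  (f : R -> V) x : derivable f x 1 -> {for x, continuous f}.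
Proof. by move/derivable1_diffP; exact: differentiable_continuous. Qed.

Definition psi_defect {R : realType} (psi : R -> R) (beta h : R) : R :=
  (1 + h) `^ (2 * beta) * psi 1 + psi 1 - 2 * psi (1 + h).

Section psi_defect.
Context {R : realType}.
Variables (psi : R -> R) (beta : R).
Hypothesis dpsi : forall x, 1 <= x -> derivable psi x 1.

Lemma psi_defect_le_lin C H h : 0 <= beta <= 1 ->
  (forall x, 1 < x -> `|derive1 psi x| <= C) -> 0 < h -> h <= H ->
  `|psi_defect psi beta h| <= (`|psi 1| * (2 + H) + 2 * C) * h.
Proof.
move=> /andP[b0 b1] psiC h0 hH.
have Dpow : `|(1 + h) `^ (2 * beta) - 1| <= h * (2 + H).
  apply: (le_trans (powR1D_sub1_le _ (ltW h0))); first by apply/andP; split; lra.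
  by apply: ler_wpM2l; [exact: ltW|rewrite lerD2l].
have Dpsi : `|psi (1 + h) - psi 1| <= C * h.
  have := @ler_norm_mean_value R psi 1 (1 + h) C.
  by rewrite [1 + h - 1]addrC addKr; apply=> [|x x1 _|x x1 _];
    rewrite ?ltrDl ?psiC //; exact: dpsi.
have -> : psi_defect psi beta h
          = psi 1 * ((1 + h) `^ (2 * beta) - 1) - 2 * (psi (1 + h) - psi 1).
  by rewrite /psi_defect; ring.
rewrite (le_trans (ler_normB _ _)) // !normrM (ger0_norm (_ : 0 <= 2)) //.
have := ler_wpM2l (normr_ge0 (psi 1)) Dpow; lra.
Qed.

Lemma psi_defect_le_sqr M h : 1 <= 2 * beta <= 2 ->
  (forall x, 1 <= x -> derivable (derive1 psi) x 1) ->
  (forall x, 1 < x -> x <= 1 + h -> `|derive1 (derive1 psi) x| <= M) ->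
  derive1 psi 1 = beta * psi 1 -> 0 < h ->
  `|psi_defect psi beta h| <= (`|psi 1| * (2 * beta) + 2 * M) * h ^+ 2.
Proof.
move=> b12 d2psi psi''M psi'1 h0.
have hE : 1 + h - 1 = h by rewrite addrC addKr.
have Dpow := powR1D_taylor_le b12 h0.
have Dpsi : `|psi (1 + h) - psi 1 - derive1 psi 1 * h| <= M * h ^+ 2.
  rewrite -{2 3}hE; apply: ler_norm_taylor1; rewrite ?ltrDl //.
    by move=> x x1 _; exact: dpsi.
  move=> x x1 xh.
  apply: ler_norm_mean_value => // [y y1 _|y y1 yx]; first exact: d2psi.
  by apply: psi''M; rewrite // ltW ?(lt_trans yx).
(* the linear terms cancel because [psi'(1) = beta psi(1)] *)
have -> : psi_defect psi beta h = psi 1 * ((1 + h) `^ (2 * beta) - 1 - 2 * beta * h)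
                                  - 2 * (psi (1 + h) - psi 1 - derive1 psi 1 * h).
  by rewrite psi'1 /psi_defect; ring.
rewrite (le_trans (ler_normB _ _)) // !normrM (ger0_norm (_ : 0 <= 2)) //.
have := normr_ge0 (psi 1); nra.
Qed.

Lemma continuous_psi_defect h : 0 < h -> {for h, continuous (psi_defect psi beta)}.
Proof.
move=> h0.
have c1 : {for h, continuous (fun h : R => 1 + h)}.
  by apply: continuousD; [exact: cst_continuous|exact: cvg_id].
apply: continuousB; [apply: continuousD; [apply: continuousM|]|apply: continuousM];
  try exact: cst_continuous.
- apply: (@continuous_comp _ _ _ _ (fun y => y `^ (2 * beta)) _ c1).
  by apply/derivable1_continuous/derivable_powR; rewrite in_itv /= andbT; lra.
- by apply: (@continuous_comp _ _ _ _ psi _ c1); apply/derivable1_continuous/dpsi; lra.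
Qed.

End psi_defect.

Definition increment_correction {R : realType} (psi : R -> R) (beta alpha lambda s : R) : R :=
  psi_defect psi beta s^-1 * s `^ alpha / (2 * lambda).

Section increment_correction.
Context {R : realType}.
Context {psi : R -> R} {beta alpha lambda : R}.
Local Notation u1 := (increment_correction psi beta alpha lambda).

Lemma continuous_increment_correction :
  (forall x, 1 <= x -> derivable psi x 1) -> {in `]0, +oo[, continuous u1}.
Proof.
move=> dpsi s; rewrite in_itv /= andbT => s0.
have sV0 : 0 < s^-1 by rewrite invr_gt0.
suff: {for s, continuous (fun s : R => psi_defect psi beta s^-1 * s `^ alpha / (2 * lambda))}
  by [].
apply: continuousM; last exact: cst_continuous.
apply: continuousM.
  apply: (@continuous_comp _ _ _ _ (psi_defect psi beta)).
    by apply: inv_continuous; rewrite gt_eqF.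
  exact: continuous_psi_defect.
by apply/derivable1_continuous/derivable_powR; rewrite in_itv /= andbT.
Qed.

Lemma increment_correctionE s : 0 < s -> lambda != 0 ->
  s `^ (2 * beta) * ((1 + s^-1) `^ (2 * beta) * psi 1 + psi 1
                     - 2 * (- lambda * s^-1 `^ alpha + psi (1 + s^-1)))
  = 2 * lambda * s `^ (2 * beta - alpha) * (1 + u1 s).
Proof.
move=> s0 l0; rewrite /increment_correction.
have sa : s `^ (2 * beta) = s `^ (2 * beta - alpha) * s `^ alpha.
  by rewrite -powRD ?subrK // (gt_eqF s0) implybT.
have sVa : s^-1 `^ alpha * s `^ alpha = 1.
  by rewrite -powRM ?invr_ge0 ?ltW // mulVf ?gt_eqF // powR1.
rewrite sa /psi_defect.
set Q := s `^ (_ - _); set A := s `^ alpha; set B := s^-1 `^ alpha.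
set D := (1 + s^-1) `^ (2 * beta) * psi 1 + psi 1 - 2 * psi (1 + s^-1).
have -> : Q * A * ((1 + s^-1) `^ (2 * beta) * psi 1 + psi 1
                   - 2 * (- lambda * B + psi (1 + s^-1)))
          = Q * A * D + 2 * lambda * Q * (B * A) by rewrite /D; ring.
by rewrite sVa; field.
Qed.

Lemma increment_correction_decay {n : nat} {K : R} (eta : R) :
  0 < eta -> 0 < lambda -> 0 <= K ->
  (forall h, 0 < h -> h <= eta^-1 -> `|psi_defect psi beta h| <= K * h ^+ n) ->
  exists C, 0 < C /\ forall s, eta <= s -> `|u1 s| <= C * s `^ (- (n%:R - alpha)).
Proof.
move=> eta0 l0 K0 DK; set L := (2 * lambda)^-1.
have L0 : 0 < L by rewrite invr_gt0 mulr_gt0.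
exists (K * L + 1); split=> [|s es]; first by rewrite ltr_wpDl // mulr_ge0 // ltW.
have s0 : 0 < s := lt_le_trans eta0 es.
have sV0 : 0 < s^-1 by rewrite invr_gt0.
have sn : s `^ (- (n%:R - alpha)) = s^-1 ^+ n * s `^ alpha.
  by rewrite opprB powRB ?(gt_eqF s0) ?implybT // powR_mulrn ?ltW // exprVn mulrC.
have xA0 : 0 <= s^-1 ^+ n * s `^ alpha by rewrite mulr_ge0 ?exprn_ge0 ?powR_ge0 ?ltW.
have Ds : `|psi_defect psi beta s^-1| <= K * s^-1 ^+ n.
  by apply: DK => //; rewrite lef_pV2 ?posrE.
rewrite sn /increment_correction -/L !normrM (ger0_norm (powR_ge0 _ _)) (gtr0_norm L0).
apply: (le_trans (ler_wpM2r (ltW L0) (ler_wpM2r (powR_ge0 _ _) Ds))).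
rewrite (_ : _ * _ * _ = K * L * (s^-1 ^+ n * s `^ alpha)); last by ring.
by apply: ler_wpM2r => //; rewrite lerDl.
Qed.

End increment_correction.

Theorem lemma4p1 (d : measure_display) (T : measurableType d) (R : realType)
    (P : probability T R) (X : R -> T -> R) (beta alpha lambda : R)
    (psi : R -> R) :
  0 < beta -> beta < 1 ->
  centered_gaussian_process P X ->
  self_similar P beta X ->
  H1 P beta X alpha lambda psi ->
  exists u1 : R -> R,
    {in `]0, +oo[, continuous u1} /\
    (forall s : R, 0 < s ->
       ('E_P[fun w => ((X (s + 1) w - X s w) ^+ 2)%R]
        = (2 * lambda * s `^ (2 * beta - alpha) * (1 + u1 s))%:E)%E) /\
    (forall eta : R, 0 < eta ->
       exists C_eta : R, 0 < C_eta /\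
         forall s : R, eta <= s ->
           `|u1 s| <= C_eta * s `^ (- delta1 alpha)).
Proof.
move=> b0 b1 [mX _] Xss [[[a0 a2b] l0] phiE [U [_ [sU dU]]] [C [C0 psiC]] psi'1].
have dpsi x : 1 <= x -> derivable psi x 1 /\ derivable (derive1 psi) x 1.
  by move=> x1; apply/dU/sU; rewrite /= in_itv /= x1.
exists (increment_correction psi beta alpha lambda); split.
  by apply: continuous_increment_correction => x /dpsi[].
split=> [s s0|eta eta0].
  have phi1 : phi_cov P X 1 = (psi 1)%:E.
    by rewrite phiE // subrr powR0 ?gt_eqF // mulr0 add0r.
  have phiV : phi_cov P X (1 + s^-1) = (- lambda * s^-1 `^ alpha + psi (1 + s^-1))%:E.
    by rewrite phiE ?lerDl ?invr_ge0 ?ltW // [1 + _ - 1]addrC addKr.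
  rewrite (self_similar_increment_moment mX Xss s0 phi1 phiV).
  by rewrite increment_correctionE ?gt_eqF.
rewrite /delta1; case: ltP => a1.
- apply: (increment_correction_decay (n := 1) (K := `|psi 1| * (2 + eta^-1) + 2 * C)) => //.
    by rewrite addr_ge0 ?mulr_ge0 // addr_ge0 // invr_ge0 ltW.
  move=> h h0 hH; apply: psi_defect_le_lin => //.
  + by move=> x /dpsi[].
  + by rewrite !ltW.
  + move=> x x1; apply: (le_trans (psiC x x1).1); rewrite -[leRHS]mulr1 ler_wpM2l //.
    have : alpha - 1 <= 0 by lra.
    by move/(ler_powR (ltW x1)); rewrite powRr0.
- apply: (increment_correction_decay (n := 2)
            (K := `|psi 1| * (2 * beta) + 2 * (C * eta^-1 `^ (alpha - 1)))) => //.
    by rewrite addr_ge0 ?mulr_ge0 ?powR_ge0 // ltW.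
  move=> h h0 hH; apply: psi_defect_le_sqr => //.
  + by move=> x /dpsi[].
  + by apply/andP; split; lra.
  + by move=> x /dpsi[].
  + move=> x x1 xh; have x0 : 0 < x := lt_trans ltr01 x1.
    apply: (le_trans (psiC x x1).2); rewrite -mulrA ler_wpM2l // -[leRHS]mul1r.
    apply: ler_pM; rewrite ?invr_ge0 ?powR_ge0 ?invf_le1 ?(ltW x0) ?(ltW x1) //.
    by apply: ge0_ler_powR; rewrite ?nnegrE; lra.
  + exact: psi'1.
Qed.
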